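(* For finite abstract simplicial complexes $G,H$, let $g=L_{G\times H}^{-1}$. Then $\sum_{X,Y\in G\times H}g(X,Y)=\chi(G\times H)$, where $\chi(G\times H)=\sum_{(x,y)\in G\times H}(-1)^{\dim(x)+\dim(y)}=\chi(G)\chi(H)$.
   Context: A finite abstract simplicial complex is a finite set of nonempty finite sets closed under taking nonempty subsets; $\dim(x)=|x|-1$ and $\chi(G)=\sum_{x\in G}(-1)^{\dim(x)}$. The connection matrix $L_G$ is indexed by elements of $G$, $L_G(x,y)=1$ if $x\cap y\neq\emptyset$, else $0$; it is known to be invertible (indeed unimodular). $G\times H$ is the set of pairs $(x,y)$, $x\in G$, $y\in H$, with connection matrix $L_{G\times H}((x,y),(a,b))=1$ if $x\cap a\ne\emptyset$ and $y\cap b\neq\emptyset$, else $0$; it equals the Kronecker product $L_G\otimes L_H$ and hence is invertible. *)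

From HB Require Import structures.
From mathcomp Require Import all_boot all_order all_algebra.
Set Implicit Arguments. Unset Strict Implicit. Unset Printing Implicit Defensive.
Import GRing.Theory Num.Theory.
Local Open Scope ring_scope.

Definition is_complex (V : finType) (G : {set {set V}}) : Prop :=
  set0 \notin G /\
  (forall x y : {set V}, x \in G -> y \subset x -> y != set0 -> y \in G).

Definition sgn_dim (V : finType) (x : {set V}) : rat := (-1) ^+ (#|x|.-1).

Definition euler_char (V : finType) (G : {set {set V}}) : rat :=
  \sum_(x in G) sgn_dim x.

Definition prod_cplx (V W : finType) (G : {set {set V}}) (H : {set {set W}})
  : {set {set V} * {set W}} := setX G H.

Definition euler_char_prod (V W : finType) (G : {set {set V}}) (H : {set {set W}}) : rat :=
  \sum_(p in prod_cplx G H) (-1) ^+ (#|p.1|.-1 + #|p.2|.-1).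

Definition conn_prod (V W : finType) (G : {set {set V}}) (H : {set {set W}})
  : 'M[rat]_#|prod_cplx G H| :=
  \matrix_(i, j)
    let X := enum_val i in let Y := enum_val j in
    if (X.1 :&: Y.1 != set0) && (X.2 :&: Y.2 != set0) then 1 else 0.

From HB Require Import structures.
From mathcomp Require Import all_boot all_order all_algebra ring.
Set Implicit Arguments. Unset Strict Implicit.
Import GRing.Theory Num.Theory.
Local Open Scope ring_scope.

(* The inverse of L_G is Knill's Green function
     g(x, a) = ω(x) ω(a) Σ_{z ∈ G, x ∪ a ⊆ z} ω(z),   ω(x) = (-1)^dim(x).
   Checking L_G g = 1 reduces, after exchanging sums, to alternating sums over Boolean
   intervals {z | a ⊆ z ⊆ w}; toggling a vertex of w \ a is a sign-reversing involution,
   so such a sum vanishes unless a = w.  Summing g over all pairs gives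
   Σ_z ω(z) (Σ_{∅ ≠ x ⊆ z} ω(x))^2 = Σ_z ω(z) = χ(G).  For G × H the connection matrix
   is L_G ⊗ L_H, whose inverse is g_G ⊗ g_H, so the sum of its entries is χ(G) χ(H). *)

Section SignedSubsetSums.
Variable T : finType.
Implicit Types (a w x z : {set T}) (b : T).

Definition sgn_card x : rat := (-1) ^+ #|x|.

Definition toggle b x := if b \in x then x :\ b else b |: x.

Lemma toggleK b : involutive (toggle b).
Proof.
move=> x; rewrite /toggle; case: (boolP (b \in x)) => bx.
  by rewrite setD11 setD1K.
by rewrite setU11 setU1K.
Qed.

Lemma sgn_card_toggle b x : sgn_card (toggle b x) = - sgn_card x.
Proof.
rewrite /sgn_card /toggle; case: (boolP (b \in x)) => bx.
  by rewrite (cardsD1 b x) bx exprS mulN1r opprK.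
by rewrite cardsU1 bx exprS mulN1r.
Qed.

Lemma sgn_card0 : sgn_card set0 = 1.
Proof. by rewrite /sgn_card cards0. Qed.

Lemma sgn_cardK x : sgn_card x * sgn_card x = 1.
Proof. by rewrite /sgn_card -exprD -signr_odd oddD addbb. Qed.

Lemma sgn_dimE x : x != set0 -> sgn_dim x = - sgn_card x.
Proof.
rewrite -card_gt0 /sgn_dim /sgn_card; case: #|x| => // n _.
by rewrite exprS mulN1r opprK.
Qed.

Lemma subset_toggle a b x : b \notin a -> (a \subset toggle b x) = (a \subset x).
Proof.
move=> ba; rewrite /toggle; case: (boolP (b \in x)) => bx.
  by rewrite subsetD1 ba andbT.
by rewrite -subDset (setDidPl _) // disjoint_sym disjoints1.
Qed.

Lemma toggle_subset b w x : b \in w -> (toggle b x \subset w) = (x \subset w).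
Proof.
move=> bw; rewrite /toggle; case: (boolP (b \in x)) => bx.
  by rewrite subDset (setUidPr _) // sub1set.
by rewrite subUset sub1set bw.
Qed.

Lemma sum_sgn_card_toggle_stable b (P : pred {set T}) :
  (forall x, P (toggle b x) = P x) -> \sum_(x | P x) sgn_card x = 0.
Proof.
move=> Ptog.
have opp : \sum_(x | P x) sgn_card x = - \sum_(x | P x) sgn_card x.
  rewrite {1}(reindex_inj (can_inj (toggleK b))) -sumrN /=.
  by apply: eq_big => [x|x _]; rewrite ?Ptog ?sgn_card_toggle.
by apply/eqP; move/eqP: opp; rewrite -subr_eq0 opprK -mulr2n mulrn_eq0.
Qed.

Lemma sum_sgn_card_interval a w :
  \sum_(z : {set T} | (a \subset z) && (z \subset w)) sgn_card z =
  (a == w)%:R * sgn_card a.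
Proof.
have [<-|neq_aw] := eqVneq a w.
  rewrite mul1r (big_pred1 a) // => z /=.
  by rewrite eq_sym eqEsubset andbC.
rewrite mul0r; have [sub_aw|nsub_aw] := boolP (a \subset w); last first.
  rewrite big_pred0 // => z; apply: contraNF nsub_aw => /andP[az zw].
  exact: subset_trans zw.
have /properP[_ [b bw ba]] : a \proper w by rewrite properEneq neq_aw.
apply: (sum_sgn_card_toggle_stable (b := b)) => x /=.
by rewrite subset_toggle // toggle_subset.
Qed.

Lemma sum_sgn_card_subsets w :
  \sum_(z : {set T} | z \subset w) sgn_card z = (w == set0)%:R.
Proof.
rewrite (eq_bigl (fun z => (set0 \subset z) && (z \subset w))) => [|z].
  by rewrite sum_sgn_card_interval eq_sym sgn_card0 mulr1.
by rewrite sub0set.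
Qed.

End SignedSubsetSums.

Section GreenFunction.
Variables (V : finType) (G : {set {set V}}).
Hypothesis G_complex : is_complex G.
Implicit Types (a w x y z : {set V}).

Lemma complex_neq0 x : x \in G -> x != set0.
Proof. by case: G_complex => G0 _ xG; apply: contraNneq G0 => <-. Qed.

Lemma complex_subset x y : x \in G -> y \subset x -> y != set0 -> y \in G.
Proof. by case: G_complex => _; apply. Qed.

Lemma sum_sgn_card_faces z : z \in G -> \sum_(x in G | x \subset z) sgn_card x = -1.
Proof.
move=> zG; have := sum_sgn_card_subsets z; rewrite (negbTE (complex_neq0 zG)).
rewrite (bigD1 set0) ?sub0set //= sgn_card0 => /eqP.
rewrite addrC addr_eq0 => /eqP <-; apply: eq_bigl => x.
apply/andP/andP => [[xG xz]|[xz x0]]; split => //; first exact: complex_neq0.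
exact: complex_subset zG xz x0.
Qed.

Lemma sum_sgn_card_faces_meeting w z : z \in G ->
  \sum_(x in G | (x \subset z) && (w :&: x != set0)) sgn_card x = - (z \subset w)%:R.
Proof.
move=> zG; have := sum_sgn_card_subsets z; rewrite (negbTE (complex_neq0 zG)).
rewrite (bigID (fun x => w :&: x != set0)) /=.
have -> : \sum_(x : {set V} | (x \subset z) && ~~ (w :&: x != set0)) sgn_card x =
          (z \subset w)%:R.
  rewrite -setD_eq0 -sum_sgn_card_subsets; apply: eq_bigl => x.
  by rewrite subsetD negbK setI_eq0 disjoint_sym.
move=> /eqP; rewrite addr_eq0 => /eqP <-; apply: eq_bigl => x.
rewrite andb_idl // => /andP[xz wx]; apply: complex_subset zG xz _.
by apply: contraNneq wx => ->; rewrite setI0.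
Qed.

Lemma sum_sgn_card_faces_interval a w : a \in G -> w \in G ->
  \sum_(z in G | (a \subset z) && (z \subset w)) sgn_card z = (a == w)%:R * sgn_card a.
Proof.
move=> aG wG; rewrite -sum_sgn_card_interval; apply: eq_bigl => z.
rewrite andb_idl // => /andP[az zw]; apply: complex_subset wG zw _.
by apply: contraNneq (complex_neq0 aG) => z0; rewrite -subset0 -z0.
Qed.

(* On faces sgn_card x = - ω(x), so this is g(x, a) of the header. *)
Definition green x a : rat :=
  - (sgn_card x * sgn_card a * \sum_(z in G | (x \subset z) && (a \subset z)) sgn_card z).

Lemma conn_mul_green w a : w \in G -> a \in G ->
  \sum_(x in G) (if w :&: x != set0 then 1 else 0) * green x a = (w == a)%:R.
Proof.
move=> wG aG.
transitivity (- sgn_card a * \sum_(x in G | w :&: x != set0)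
    \sum_(z in G | (x \subset z) && (a \subset z)) sgn_card x * sgn_card z).
  rewrite big_mkcondr mulr_sumr; apply: eq_bigr => x _.
  case: ifP => _; last by rewrite mul0r mulr0.
  by rewrite mul1r -mulr_sumr /green; ring.
rewrite (exchange_big_dep (fun z => (z \in G) && (a \subset z))) /=; last first.
  by move=> x z _ /andP[-> /andP[_ ->]].
transitivity (- sgn_card a * \sum_(z in G | a \subset z) sgn_card z * - (z \subset w)%:R).
  congr (_ * _); apply: eq_bigr => z /andP[zG az].
  rewrite -(sum_sgn_card_faces_meeting w zG) mulr_sumr; apply: eq_big => x.
    by rewrite zG az andbT /= -andbA (andbC (w :&: x != set0)).
  by move=> _; rewrite mulrC.
transitivity (sgn_card a * \sum_(z in G | (a \subset z) && (z \subset w)) sgn_card z).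
  rewrite -[RHS]mulrNN -sumrN; congr (_ * _).
  rewrite !big_mkcondr; apply: eq_bigr => z _.
  by case: (a \subset z); case: (z \subset w); rewrite /= ?mulrN1 ?oppr0 ?mulr0.
by rewrite sum_sgn_card_faces_interval // mulrCA sgn_cardK mulr1 eq_sym.
Qed.

Lemma sum_green : \sum_(x in G) \sum_(a in G) green x a = euler_char G.
Proof.
pose face_sgn z x := if x \subset z then sgn_card x else 0.
have sum_face_sgn z : z \in G -> \sum_(x in G) face_sgn z x = -1.
  by move=> zG; rewrite -big_mkcondr sum_sgn_card_faces.
transitivity (\sum_(x in G) \sum_(a in G) \sum_(z in G)
    - (sgn_card z * (face_sgn z x * face_sgn z a))).
  apply: eq_bigr => x _; apply: eq_bigr => a _.
  rewrite /green big_mkcondr mulr_sumr -sumrN; apply: eq_bigr => z _.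
  rewrite /face_sgn; case: (x \subset z); case: (a \subset z) => /=; ring.
under eq_bigr do rewrite exchange_big /=.
rewrite exchange_big /=; apply: eq_bigr => z zG.
transitivity (- (sgn_card z *
                 ((\sum_(x in G) face_sgn z x) * \sum_(a in G) face_sgn z a))).
  rewrite big_distrlr mulr_sumr -sumrN; apply: eq_bigr => x _.
  by rewrite mulr_sumr -sumrN.
by rewrite sum_face_sgn // sgn_dimE ?complex_neq0 // mulrNN mulr1.
Qed.

End GreenFunction.

Lemma sum_setX (R : nmodType) (I J : finType) (A : {set I}) (B : {set J})
    (F : I * J -> R) :
  \sum_(p in setX A B) F p = \sum_(x in A) \sum_(y in B) F (x, y).
Proof. by rewrite pair_big; apply: eq_big => [[x y]|[x y] _]; rewrite ?in_setX. Qed.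

Lemma sum2_setX_mul (R : comPzSemiRingType) (I J : finType) (A : {set I}) (B : {set J})
    (F : I -> I -> R) (F' : J -> J -> R) :
  \sum_(p in setX A B) \sum_(q in setX A B) F p.1 q.1 * F' p.2 q.2 =
  (\sum_(x in A) \sum_(a in A) F x a) * \sum_(y in B) \sum_(b in B) F' y b.
Proof.
rewrite sum_setX big_distrlr /=; apply: eq_bigr => x _; apply: eq_bigr => y _.
by rewrite sum_setX big_distrlr.
Qed.

Lemma euler_char_prodE (V W : finType) (G : {set {set V}}) (H : {set {set W}}) :
  euler_char_prod G H = euler_char G * euler_char H.
Proof.
rewrite /euler_char_prod sum_setX big_distrlr /=.
by apply: eq_bigr => x _; apply: eq_bigr => y _; rewrite exprD.
Qed.

Lemma mulmx1_invmx (R : comUnitRingType) n (A B : 'M[R]_n) :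
  A *m B = 1%:M -> invmx A = B.
Proof.
move=> AB1; have [uA _] := mulmx1_unit AB1.
by rewrite -[invmx A]mulmx1 -AB1 mulKmx.
Qed.

Section ProductComplex.
Variables (V W : finType) (G : {set {set V}}) (H : {set {set W}}).
Hypotheses (G_complex : is_complex G) (H_complex : is_complex H).
Implicit Types p q r : {set V} * {set W}.

Definition green_prod p q := green G p.1 q.1 * green H p.2 q.2.

Definition green_prod_mx : 'M[rat]_#|prod_cplx G H| :=
  \matrix_(i, j) green_prod (enum_val i) (enum_val j).

Lemma conn_mul_green_prod p r : p \in prod_cplx G H -> r \in prod_cplx G H ->
  \sum_(q in prod_cplx G H)
     (if (p.1 :&: q.1 != set0) && (p.2 :&: q.2 != set0) then 1 else 0) * green_prod q r
  = (p == r)%:R.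
Proof.
case: p r => [p1 p2] [r1 r2]; rewrite !in_setX /= => /andP[p1G p2H] /andP[r1G r2H].
transitivity ((\sum_(x in G) (if p1 :&: x != set0 then 1 else 0) * green G x r1) *
              \sum_(y in H) (if p2 :&: y != set0 then 1 else 0) * green H y r2).
  rewrite sum_setX big_distrlr /=; apply: eq_bigr => x _; apply: eq_bigr => y _.
  rewrite /green_prod /=.
  by case: (p1 :&: x != set0); case: (p2 :&: y != set0) => /=; ring.
by rewrite !conn_mul_green // -natrM mulnb xpair_eqE.
Qed.

Lemma conn_prod_mul_green : conn_prod G H *m green_prod_mx = 1%:M.
Proof.
apply/matrixP => i k; rewrite !mxE -(inj_eq enum_val_inj).
rewrite -conn_mul_green_prod ?enum_valP // [RHS]big_enum_val; apply: eq_bigr => j _.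
by rewrite !mxE.
Qed.

End ProductComplex.

Theorem mainTheorem14 (V W : finType) (G : {set {set V}}) (H : {set {set W}}) :
  is_complex G -> is_complex H ->
  (\sum_(i < #|prod_cplx G H|) \sum_(j < #|prod_cplx G H|)
      invmx (conn_prod G H) i j = euler_char_prod G H)
  /\ euler_char_prod G H = euler_char G * euler_char H.
Proof.
move=> hG hH; split; last exact: euler_char_prodE.
rewrite (mulmx1_invmx (conn_prod_mul_green hG hH)) euler_char_prodE -!sum_green //.
rewrite -sum2_setX_mul [RHS]big_enum_val; apply: eq_bigr => i _.
by rewrite [RHS]big_enum_val; apply: eq_bigr => j _; rewrite mxE.
Qed.
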